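(* (i) There exist a sequence of Pauli Hamiltonians $H^{(m)}=\sum_i c_i P_i$ with all coefficients satisfying $|c_i|=\Theta(1)$, indexed by $m\to\infty$, such that the grouping $\mathcal{G}^{(m)}_{\mathrm{SI}}$ produced by sorted insertion has $m$ groups, and an overlapped grouping $\mathcal{R}^{(m)}$ of $H^{(m)}$, such that $$\frac{\mathrm{Var}^*(\mathcal{G}^{(m)}_{\mathrm{SI}})}{\mathrm{Var}^*(\mathcal{R}^{(m)})}=\Theta(m),$$ where variances are computed in the state-independent, zero-covariance model described in the context (for the maximally mixed state). (ii) In this same model, this is asymptotically the largest possible reduction: for any (disjoint) grouping $\mathcal{G}$ with $m$ groups of a Hamiltonian $H$ and any overlapped grouping $\mathcal{R}$ of $H$, $\mathrm{Var}^*(\mathcal{G})/\mathrm{Var}^*(\mathcal{R})=O(m)$.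
   Context: A Pauli Hamiltonian on $n$ qubits is $H=\sum_{i=1}^N c_iP_i$ with real nonzero $c_i$ and distinct Pauli strings $P_i\in\{I,X,Y,Z\}^{\otimes n}$; $\mathrm{supp}(H)=\{P_1,\dots,P_N\}$. A grouping of $H$ is a list $\mathcal{G}=(G^{[1]},\dots,G^{[m]})$ of pairwise disjoint sets, each consisting of mutually commuting operators of $\mathrm{supp}(H)$, whose union is $\mathrm{supp}(H)$; an overlapped grouping is the same without the disjointness requirement. Sorted insertion: order the Pauli terms by decreasing $|c_i|$ and insert each term in turn into the first existing group all of whose members commute with it, creating a new group if there is none. Measurement model: a total budget of $M$ shots is split as positive shot counts $M_j$ with $\sum_j M_j=M$; group $G^{[j]}$ is measured $M_j$ times, each shot giving simultaneous $\pm1$ outcomes of all its operators; shots are independent. For $P_i$ let $\Gamma(i)=\{j:P_i\in G^{[j]}\}$; $\langle P_i\rangle$ is estimated by $\sum_{j\in\Gamma(i)}w_{i,j}\overline{\langle P_i\rangle}_{(j)}$ with $\sum_{j\in\Gamma(i)}w_{i,j}=1$, where $\overline{\langle P_i\rangle}_{(j)}$ is the sample mean over the shots of group $j$, and the energy estimator is $\overline{E}(w)=\sum_ic_i\overline{\langle P_i\rangle}(w)$. State-independent zero-covariance model: each Pauli has single-shot variance $1$ and all covariances between distinct Pauli operators are $0$ (as for the maximally mixed state). $\mathrm{Var}^*(\cdot)$ denotes the variance of $\overline{E}(w)$ in this model minimized over the weights $w$ and over the shot allocation $\{M_j\}$ with fixed total $M$; for a disjoint grouping this equals $(\sum_j\sqrt{S_j})^2/M$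 with $S_j=\sum_{i:P_i\in G^{[j]}}c_i^2$. *)

From HB Require Import structures.
From mathcomp Require Import all_boot all_order all_algebra.
From mathcomp Require Import boolp classical_sets reals.
Set Implicit Arguments. Unset Strict Implicit. Unset Printing Implicit Defensive.
Import Order.TTheory GRing.Theory Num.Theory.
Local Open Scope ring_scope.

(* A Pauli string on n qubits: each qubit carries 0 = I, 1 = X, 2 = Y, 3 = Z. *)
Definition pauli (n : nat) := 'I_n -> 'I_4.

Definition pcommute (n : nat) (p q : pauli n) : bool :=
  ~~ odd #|[set k : 'I_n | [&& (p k : nat) != 0%N, (q k : nat) != 0%N & p k != q k]]|.

(* A Pauli Hamiltonian H = sum_(i < N) c_i P_i : nonzero real coefficients and
   distinct Pauli strings.  supp(H) is identified with the index set 'I_N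
   (P is injective). *)
Definition is_pauli_hamiltonian (R : realType) (n N : nat)
    (c : 'I_N -> R) (P : 'I_N -> pauli n) : Prop :=
  (forall i, c i != 0) /\ injective P.

Definition commuting_set (n N : nat) (P : 'I_N -> pauli n) (A : {set 'I_N}) : bool :=
  [forall i in A, forall j in A, pcommute (P i) (P j)].

Definition overlapped_grouping (n N m : nat) (P : 'I_N -> pauli n)
    (G : 'I_m -> {set 'I_N}) : Prop :=
  (forall j, commuting_set P (G j)) /\ (forall i, exists j, i \in G j).

Definition grouping (n N m : nat) (P : 'I_N -> pauli n)
    (G : 'I_m -> {set 'I_N}) : Prop :=
  overlapped_grouping P G /\
  (forall j j', j != j' -> [disjoint G j & G j']).

(* Variance of the estimator E(w) in the state-independent zero-covariance
   model (each Pauli has single-shot variance 1, distinct Paulis have zero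
   covariance, shots independent), for shot counts Ms and weights w:
   Var = sum_i c_i^2 sum_(j in Gamma(i)) w_(i,j)^2 / M_j. *)
Definition model_variance (R : realType) (N m : nat) (c : 'I_N -> R)
    (G : 'I_m -> {set 'I_N}) (Ms : 'I_m -> R) (w : 'I_N -> 'I_m -> R) : R :=
  \sum_(i < N) c i ^+ 2 * \sum_(j < m | i \in G j) (w i j ^+ 2 / Ms j).

Definition admissible (R : realType) (N m : nat) (M : R)
    (G : 'I_m -> {set 'I_N}) (Ms : 'I_m -> R) (w : 'I_N -> 'I_m -> R) : Prop :=
  (forall j, 0 < Ms j) /\ \sum_(j < m) Ms j = M /\
  (forall i, \sum_(j < m | i \in G j) w i j = 1).

Definition var_opt (R : realType) (N m : nat) (M : R) (c : 'I_N -> R)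
    (G : 'I_m -> {set 'I_N}) : R :=
  inf [set v : R | exists (Ms : 'I_m -> R) (w : 'I_N -> 'I_m -> R),
         admissible M G Ms w /\ v = model_variance c G Ms w].

Fixpoint si_insert (T : Type) (comm : T -> T -> bool) (i : T)
    (gs : seq (seq T)) : seq (seq T) :=
  match gs with
  | [::] => [:: [:: i]]
  | g :: gs' => if all (comm i) g then rcons g i :: gs'
                else g :: si_insert comm i gs'
  end.

(* Terms ordered by decreasing |c_i| (stable sort: ties broken by index
   order), then inserted one by one into the first group all of whose members
   commute with it, or into a new group. *)
Definition sorted_insertion_seq (R : realType) (n N : nat) (c : 'I_N -> R)
    (P : 'I_N -> pauli n) : seq (seq 'I_N) :=
  foldl (fun gs i => si_insert (fun a b => pcommute (P a) (P b)) i gs) [::]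
        (sort (fun i j => `|c j| <= `|c i|) (enum 'I_N)).

Definition si_num_groups (R : realType) (n N : nat) (c : 'I_N -> R)
    (P : 'I_N -> pauli n) : nat := size (sorted_insertion_seq c P).

Definition si_grouping (R : realType) (n N : nat) (c : 'I_N -> R)
    (P : 'I_N -> pauli n) : 'I_(si_num_groups c P) -> {set 'I_N} :=
  fun j => [set x in nth [::] (sorted_insertion_seq c P) j].
Arguments si_grouping {R n N} c P _.

From HB Require Import structures.
From mathcomp Require Import all_boot all_order all_algebra.
From mathcomp Require Import boolp classical_sets reals.
From mathcomp Require Import zify ring lra.
Set Implicit Arguments. Unset Strict Implicit. Unset Printing Implicit Defensive.
Import Order.TTheory GRing.Theory Num.Theory.

(* For a disjoint grouping with m groups, giving each group M/m shots yields
   variance m (sum_i c_i^2) / M, whereas in any overlapped grouping term i gets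
   at most M shots in all and so contributes at least c_i^2 / M; both bounds
   rest on the tangent-line inequality w^2/x >= 2wa - xa^2.  This gives (ii).
   For (i), take on m qubits the 2m unit-coefficient terms X_l and Z on all
   qubits but l.  Two of them anticommute exactly when they are of different
   kinds with different l, so sorted insertion pairs each X_l with its
   Z-string: m groups of weight 2, hence Var* = 2m^2/M.  Putting all X_l in one
   group and all Z-strings in another gives two groups of weight m, hence
   Var* = 4m/M, and the ratio is m/2. *)

Section SortedInsertionPairs.
Variables (T : eqType) (comm : T -> T -> bool).

Definition pair_group (p : T * T) : seq T := [:: p.1; p.2].

Lemma si_insert_new x gs : all (fun g => ~~ all (comm x) g) gs ->
  si_insert comm x gs = rcons gs [:: x].
Proof. by elim: gs => //= g gs IH /andP[/negbTE -> /IH ->]. Qed.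

Lemma si_insert_rcons x gs g : all (fun g => ~~ all (comm x) g) gs ->
  all (comm x) g -> si_insert comm x (rcons gs g) = rcons gs (rcons g x).
Proof.
by move=> + xg; elim: gs => /= [|g' gs IH /andP[/negbTE -> /IH ->]]; rewrite ?xg.
Qed.

Definition pair_excludes (p q : T * T) := ~~ comm q.1 p.2 && ~~ comm q.2 p.1.

Lemma foldl_si_insert_pairs qs ps :
  pairwise pair_excludes (qs ++ ps) -> all (fun p => comm p.2 p.1) ps ->
  foldl (fun gs x => si_insert comm x gs) (map pair_group qs)
        (flatten (map pair_group ps)) = map pair_group (qs ++ ps).
Proof.
elim: ps qs => [|[x y] ps IH] qs pw; first by rewrite cats0.
move=> /andP[/= yx comm_ps].
have excl q : q \in qs -> pair_excludes q (x, y).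
  move: pw; rewrite pairwise_cat => /and3P[/allrelP excl _ _] qin.
  by apply: excl => //; exact: mem_head.
rewrite /= (@si_insert_new x); last first.
  rewrite all_map; apply/allP => q /excl /andP[/negbTE /= nx _].
  by rewrite nx andbF.
rewrite si_insert_rcons /= ?yx //; last first.
  by rewrite all_map; apply/allP => q /excl /andP[_ /negbTE /= ny]; rewrite ny.
by rewrite -[[:: x; y]]/(pair_group (x, y)) -map_rcons IH ?cat_rcons.
Qed.

End SortedInsertionPairs.
Arguments pair_group {T}.

Lemma sort_trivial_rel (T : Type) (leT : rel T) s :
  (forall x y, leT x y) -> sort leT s = s.
Proof.
move=> leT_true; apply: sorted_sort; first by move=> y x z _ _.
apply: pairwise_sorted; elim: s => //= x s ->.
by rewrite andbT (eq_all (a2 := predT)) ?all_predT // => y; exact: leT_true.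
Qed.

Local Open Scope ring_scope.

Lemma tangent_le_sqr_div (R : realFieldType) (w x a : R) :
  0 < x -> 2 * w * a - x * a ^+ 2 <= w ^+ 2 / x.
Proof.
move=> x_gt0; rewrite -subr_ge0.
have -> : w ^+ 2 / x - (2 * w * a - x * a ^+ 2) = (w - x * a) ^+ 2 / x.
  by field; rewrite gt_eqF.
by rewrite divr_ge0 ?sqr_ge0 ?ltW.
Qed.

Section OptimalVariance.
Variables (R : realType) (N K : nat) (M : R) (c : 'I_N -> R).
Variable G : 'I_K -> {set 'I_N}.
Hypothesis M_gt0 : 0 < M.
Local Open Scope classical_set_scope.

Definition achievable_variances : set R :=
  [set v | exists Ms w, admissible M G Ms w /\ v = model_variance c G Ms w].

Lemma model_variance_ge0 Ms w :
  (forall j, 0 < Ms j) -> 0 <= model_variance c G Ms w.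
Proof.
move=> Ms_gt0; rewrite sumr_ge0 // => i _; rewrite mulr_ge0 ?sqr_ge0 //.
by rewrite sumr_ge0 // => j _; rewrite divr_ge0 ?sqr_ge0 ?ltW.
Qed.

Lemma var_opt_le v : achievable_variances v -> var_opt M c G <= v.
Proof.
move=> Av; apply: ge_inf Av; exists 0 => _ [Ms [w [[Ms_gt0 _] ->]]].
exact: model_variance_ge0.
Qed.

Lemma var_opt_empty : ~ (achievable_variances !=set0) -> var_opt M c G = 0.
Proof.
move=> A0; rewrite /var_opt -[inf _]/(inf achievable_variances).
suff -> : achievable_variances = set0 by rewrite inf0.
by apply/seteqP; split => // v Av; apply: A0; exists v.
Qed.

(* Term [i] gets at most [M] shots in all; use the tangent at [a = 1 / M]. *)
Lemma model_variance_ge_sum Ms w : admissible M G Ms w ->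
  (\sum_i c i ^+ 2) / M <= model_variance c G Ms w.
Proof.
case=> Ms_gt0 [sumMs sumw]; rewrite mulr_suml; apply: ler_sum => i _.
rewrite ler_wpM2l ?sqr_ge0 //.
have shots_le : \sum_(j < K | i \in G j) Ms j <= M.
  rewrite -sumMs [leRHS](bigID (fun j => i \in G j)) /= lerDl.
  by rewrite sumr_ge0 // => j _; exact: ltW.
apply: le_trans (ler_sum _ (fun j _ => tangent_le_sqr_div (w i j) M^-1 (Ms_gt0 j))).
rewrite sumrB -!mulr_suml -mulr_sumr sumw mulr1.
have : (\sum_(j < K | i \in G j) Ms j) * M^-1 ^+ 2 <= M * M^-1 ^+ 2.
  by rewrite ler_wpM2r ?sqr_ge0.
have -> : M * M^-1 ^+ 2 = M^-1 by field; exact: lt0r_neq0.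
lra.
Qed.

Lemma var_opt_ge_sum :
  achievable_variances !=set0 -> (\sum_i c i ^+ 2) / M <= var_opt M c G.
Proof.
move=> A_neq0; apply: lb_le_inf A_neq0 _ => _ [Ms [w [adm ->]]].
exact: model_variance_ge_sum.
Qed.

Variable f : 'I_N -> 'I_K.
Hypothesis G_f : forall i j, (i \in G j) = (f i == j).

Let group_weight j := \sum_(i | f i == j) c i ^+ 2.

Lemma model_variance_partition Ms w : admissible M G Ms w ->
  model_variance c G Ms w = \sum_j group_weight j / Ms j.
Proof.
case=> _ [_ sumw].
have Gamma i : (fun j => i \in G j) =1 pred1 (f i) by move=> j; rewrite G_f eq_sym.
have -> : model_variance c G Ms w = \sum_i c i ^+ 2 / Ms (f i).
  apply: eq_bigr => i _; have := sumw i.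
  by rewrite !(eq_bigl _ _ (Gamma i)) !big_pred1_eq => ->; rewrite expr1n mul1r.
rewrite (partition_big f xpredT) //; apply: eq_bigr => j _.
by rewrite /group_weight mulr_suml; apply: eq_big => // i /eqP ->.
Qed.

Lemma uniform_allocation_achievable : (0 < K)%N ->
  achievable_variances (K%:R * (\sum_i c i ^+ 2) / M).
Proof.
move=> K_gt0; have KR_gt0 : 0 < K%:R :> R by rewrite ltr0n.
have Gamma i : \sum_(j < K | i \in G j) (1 : R) = 1.
  by rewrite (eq_bigl (pred1 (f i))) ?big_pred1_eq // => j; rewrite G_f eq_sym.
exists (fun _ => M / K%:R), (fun _ _ => 1); split.
  split; first by move=> j; rewrite divr_gt0.
  split; last by move=> i; rewrite Gamma.
  by rewrite sumr_const card_ord -[X in X = _]mulr_natr divfK ?gt_eqF.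
rewrite -mulrA mulr_suml mulr_sumr; apply: eq_bigr => i _.
rewrite (eq_bigr (fun _ => 1 * (M / K%:R)^-1)); last by move=> j _; rewrite expr1n.
by rewrite -mulr_suml Gamma mul1r; field; rewrite !gt_eqF.
Qed.

Lemma var_opt_partition_le : var_opt M c G <= K%:R * (\sum_i c i ^+ 2) / M.
Proof.
have [K0|K_gt0] := posnP K; last exact/var_opt_le/uniform_allocation_achievable.
rewrite var_opt_empty ?K0 ?mul0r // => -[_ [Ms [w [[_ [sumMs _]] _]]]].
move: M_gt0; rewrite -sumMs big1 ?ltxx // => -[j j_lt] _.
by exfalso; rewrite K0 in j_lt.
Qed.

Lemma var_opt_balanced s : (0 < K)%N -> (forall j, group_weight j = s) ->
  var_opt M c G = K%:R ^+ 2 * s / M.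
Proof.
move=> K_gt0 weight_s.
have s_ge0 : 0 <= s.
  by rewrite -(weight_s (Ordinal K_gt0)) sumr_ge0 // => i _; exact: sqr_ge0.
have sum_c : \sum_i c i ^+ 2 = K%:R * s.
  rewrite (partition_big f xpredT) //= (eq_bigr (fun _ => s)) => [|j _].
    by rewrite sumr_const card_ord mulr_natl.
  exact: weight_s.
apply/eqP; rewrite eq_le; apply/andP; split.
  by have := var_opt_partition_le; rewrite sum_c expr2 mulrA.
apply: lb_le_inf; first by eexists; exact: uniform_allocation_achievable.
move=> _ [Ms [w [adm ->]]]; rewrite model_variance_partition //.
case: adm => Ms_gt0 [sumMs _]; set a := K%:R / M.
rewrite (eq_bigr (fun j => s * (1 ^+ 2 / Ms j))) => [|j _]; last first.
  by rewrite weight_s expr1n mul1r.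
(* tangent at the uniform allocation [Ms j = M / K] *)
apply: le_trans (ler_sum _ (fun j _ => ler_wpM2l s_ge0
  (tangent_le_sqr_div 1 a (Ms_gt0 j)))).
rewrite -mulr_sumr sumrB -[\sum_(j < K) (Ms j * _)]mulr_suml sumMs.
rewrite sumr_const card_ord /a.
rewrite [leRHS](_ : _ = K%:R ^+ 2 * s / M) // -mulr_natr.
by field; exact: lt0r_neq0.
Qed.

End OptimalVariance.

Lemma grouping_assignment n N m (P : 'I_N -> pauli n) (G : 'I_m -> {set 'I_N}) :
  grouping P G -> exists f : 'I_N -> 'I_m, forall i j, (i \in G j) = (f i == j).
Proof.
case=> [[_ cover] disj].
suff /fin_all_exists[f G_f] i : exists j0 : 'I_m, forall j, (i \in G j) = (j0 == j).
  by exists f.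
have [j0 in_j0] := cover i; exists j0 => j.
have [<-|ne] := eqVneq j0 j; first by rewrite in_j0.
by rewrite (disjointFr (disj j0 j ne) in_j0).
Qed.

Lemma var_opt_ratio_le (R : realType) n N (c : 'I_N -> R) (P : 'I_N -> pauli n)
    m (G : 'I_m -> {set 'I_N}) mR (Rg : 'I_mR -> {set 'I_N}) M :
  0 < M -> grouping P G -> var_opt M c G / var_opt M c Rg <= m%:R.
Proof.
move=> M_gt0 /grouping_assignment[f G_f].
have [->|var_neq0] := eqVneq (var_opt M c Rg) 0; first by rewrite invr0 mulr0.
have : (achievable_variances M c Rg !=set0)%classic.
  by apply: contrapT => /var_opt_empty/eqP; exact/negP.
move=> /(var_opt_ge_sum M_gt0) lb.
have var_gt0 : 0 < var_opt M c Rg.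
  rewrite lt_def var_neq0 (le_trans _ lb) // divr_ge0 ?(ltW M_gt0) //.
  by apply: sumr_ge0 => i _; exact: sqr_ge0.
rewrite ler_pdivrMr // (le_trans (var_opt_partition_le c M_gt0 G_f)) //.
by rewrite -mulrA ler_wpM2l.
Qed.

Lemma half_eqE n l : (n./2 == l) = (n == l.*2) || (n == l.*2.+1).
Proof.
apply/eqP/orP => [<-|[]/eqP->] /=; rewrite ?doubleK ?uphalf_double //.
by rewrite -{1 3}[n]odd_double_half; case: odd; [right | left].
Qed.

Lemma flatten_iota_pairs a k :
  flatten [seq [:: l.*2; l.*2.+1] | l <- iota a k] = iota a.*2 k.*2.
Proof. by elim: k a => // k IH a; rewrite /= IH doubleS. Qed.

Lemma card_double_ord m (P : pred nat) :
  #|[pred i : 'I_(m.*2) | P i]| = (\sum_(l < m) (P l.*2 + P l.*2.+1))%N.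
Proof.
rewrite -sum1_card big_mkcond /= (eq_bigr (fun i : 'I_(m.*2) => nat_of_bool (P i))).
  rewrite -(big_mkord xpredT (fun i => nat_of_bool (P i))).
  rewrite -(big_mkord xpredT (fun l => P l.*2 + P l.*2.+1)%N).
  elim: m => [|m IH]; first by rewrite !big_geq.
  by rewrite doubleS !big_nat_recr //= IH addnA.
by move=> i _; rewrite inE; case: (P i).
Qed.

Lemma card_set_ord_eq n (b : bool) h : (h < n)%N ->
  #|[set k : 'I_n | b && (k == h :> nat)]| = b.
Proof.
move=> h_lt; case: b.
  rewrite (_ : [set k | _] = [set Ordinal h_lt]) ?cards1 //.
  by apply/setP => k; rewrite !inE -val_eqE.
by rewrite eq_card0 // => k; rewrite !inE.
Qed.

(* Codes as in [pauli]: term [2l] is X on qubit [l]; term [2l+1] is Z on every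
   qubit except [l]. *)
Definition xz_site (t k : nat) : nat :=
  if k == t./2 then (if odd t then 0 else 1) else (if odd t then 3 else 0).

Lemma xz_site_lt4 t k : (xz_site t k < 4)%N.
Proof. by rewrite /xz_site; case: (k == _); case: odd. Qed.

Lemma xz_site_clash t t' k :
  [&& xz_site t k != 0%N, xz_site t' k != 0%N & xz_site t k != xz_site t' k]
  = ((odd t != odd t') && (t./2 != t'./2)) && (k == (if odd t then t' else t)./2).
Proof.
rewrite /xz_site; case: (eqVneq k t./2) => [->|k_t].
  by case: (odd t) (odd t') => [] [] /=; rewrite ?eqxx //=; case: (t./2 =P t'./2).
case: (eqVneq k t'./2) => [k_t'|k_t']; last first.
  case: (odd t) (odd t') => [] [] /=;
  by rewrite ?(negbTE k_t) ?(negbTE k_t') ?andbF.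
rewrite {}k_t' in k_t *; rewrite [t./2 == _]eq_sym k_t.
by case: (odd t) (odd t') => [] [] //=; rewrite ?eqxx ?(negbTE k_t).
Qed.

Lemma xz_site_inj t t' :
  xz_site t t./2 = xz_site t' t./2 -> xz_site t t'./2 = xz_site t' t'./2 -> t = t'.
Proof.
move=> site_t site_t'; suff [odd_eq half_eq] : odd t = odd t' /\ t./2 = t'./2.
  by rewrite -[t]odd_double_half odd_eq half_eq odd_double_half.
move: site_t site_t'; rewrite /xz_site !eqxx [t'./2 == _]eq_sym.
by case: eqVneq => [->|_]; case: (odd t) (odd t') => [] [].
Qed.

Section XZHamiltonian.
Variables (m : nat) (R : realType).

Lemma half_ord_lt (t : 'I_(m.*2)) : (t./2 < m)%N.
Proof. by move: (ltn_ord t); lia. Qed.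

Definition xz_term (t : 'I_(m.*2)) : pauli m := fun k => inord (xz_site t k).

Lemma xz_termE t k : (xz_term t k : nat) = xz_site t k.
Proof. by rewrite inordK // xz_site_lt4. Qed.

Lemma pcommute_xz t t' :
  pcommute (xz_term t) (xz_term t') = (odd t == odd t') || (t./2 == t'./2).
Proof.
rewrite /pcommute.
under eq_finset => k do rewrite -val_eqE /= !xz_termE xz_site_clash.
rewrite card_set_ord_eq; last by case: odd; exact: half_ord_lt.
by case: (odd t == odd t'); case: (t./2 == t'./2).
Qed.

Lemma xz_term_inj : injective xz_term.
Proof.
move=> t t' eq_tt'; apply: val_inj.
have site k : (k < m)%N -> xz_site t k = xz_site t' k.
  by move=> k_lt; rewrite -!(xz_termE _ (Ordinal k_lt)) eq_tt'.
exact: xz_site_inj (site _ (half_ord_lt t)) (site _ (half_ord_lt t')).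
Qed.

Lemma double_ord_lt (l : 'I_m) : (l.*2 < m.*2)%N.
Proof. by rewrite ltn_double. Qed.

Lemma double_ord_ltS (l : 'I_m) : (l.*2.+1 < m.*2)%N.
Proof. by rewrite ltn_Sdouble. Qed.

Definition xz_pair (l : 'I_m) : 'I_(m.*2) * 'I_(m.*2) :=
  (Ordinal (double_ord_lt l), Ordinal (double_ord_ltS l)).

Definition xz_pairs := map xz_pair (enum 'I_m).

Lemma enum_xz : enum 'I_(m.*2) = flatten (map pair_group xz_pairs).
Proof.
apply: (inj_map val_inj); rewrite val_enum_ord map_flatten -!map_comp.
rewrite (eq_map (g := fun l : 'I_m => [:: l.*2; l.*2.+1])) // -enumT.
rewrite (map_comp (fun l => [:: l.*2; l.*2.+1]) val) val_enum_ord.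
by rewrite flatten_iota_pairs.
Qed.

Lemma sorted_insertion_xz :
  sorted_insertion_seq (fun=> 1 : R) xz_term = map pair_group xz_pairs.
Proof.
rewrite /sorted_insertion_seq sort_trivial_rel => [|i j]; last exact: lexx.
rewrite enum_xz (@foldl_si_insert_pairs _ _ [::]) //=.
  rewrite /xz_pairs pairwise_map; apply: (@sub_pairwise _ [rel l l' | l != l']).
    2: by rewrite -uniq_pairwise enum_uniq.
  move=> l l' /= l_neq.
  rewrite /pair_excludes /= !pcommute_xz /= !odd_double !doubleK !uphalf_double /=.
  by rewrite val_eqE eq_sym l_neq.
rewrite all_map; apply/allP => l _ /=.
by rewrite pcommute_xz /= doubleK uphalf_double eqxx orbT.
Qed.

Lemma si_num_groups_xz : si_num_groups (fun=> 1 : R) xz_term = m.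
Proof.
by rewrite /si_num_groups sorted_insertion_xz !size_map -enumT size_enum_ord.
Qed.

Lemma mem_si_grouping_xz i j :
  (i \in si_grouping (fun=> 1 : R) xz_term j) = (i./2 == j :> nat).
Proof.
have j_lt : (j < m)%N := leq_trans (ltn_ord j) (eq_leq si_num_groups_xz).
rewrite inE sorted_insertion_xz /xz_pairs -map_comp (nth_map (Ordinal j_lt)).
  by rewrite !inE -!val_eqE /= nth_enum_ord // half_eqE.
by rewrite size_enum_ord.
Qed.

Definition parity (i : 'I_(m.*2)) : 'I_2 := @Ordinal 2 (odd i) (leq_b1 (odd i)).

Definition parity_group (j : 'I_2) : {set 'I_(m.*2)} := [set i | parity i == j].

Lemma overlapped_grouping_parity : overlapped_grouping xz_term parity_group.
Proof.
split => [j|i]; last by exists (parity i); rewrite inE.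
apply/forallP => i; apply/implyP; rewrite inE => /eqP <-.
apply/forallP => i'; apply/implyP; rewrite inE pcommute_xz => /eqP/(congr1 val) /=.
by case: (odd i) (odd i') => [] [].
Qed.

Variable M : R.
Hypotheses (m_gt0 : (0 < m)%N) (M_gt0 : 0 < M).

Lemma var_opt_xz_sorted_insertion :
  var_opt M (fun=> 1) (si_grouping (fun=> 1 : R) xz_term) = m%:R ^+ 2 * 2 / M.
Proof.
have K_m := si_num_groups_xz.
have half_lt (i : 'I_(m.*2)) : (i./2 < si_num_groups (fun=> 1%R : R) xz_term)%N.
  by rewrite K_m half_ord_lt.
pose f i := Ordinal (half_lt i).
have G_f i j : (i \in si_grouping (fun=> 1 : R) xz_term j) = (f i == j).
  by rewrite mem_si_grouping_xz -val_eqE.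
rewrite (var_opt_balanced M_gt0 G_f (s := 2)) ?K_m // => j.
have j_lt : (j < m)%N := leq_trans (ltn_ord j) (eq_leq K_m).
rewrite (eq_bigr (fun=> 1)) => [|i _]; last by rewrite expr1n.
pose pair_j := xz_pair (Ordinal j_lt).
rewrite sumr_const (@eq_card _ _ [set pair_j.1; pair_j.2]).
  by rewrite cards2 -val_eqE /= ltn_eqF.
by move=> i; rewrite !inE -!val_eqE unfold_in; exact: half_eqE.
Qed.

Lemma var_opt_xz_parity :
  var_opt M (fun=> 1) parity_group = 2%:R ^+ 2 * m%:R / M.
Proof.
have G_f i j : (i \in parity_group j) = (parity i == j) by rewrite inE.
rewrite (var_opt_balanced M_gt0 G_f (s := m%:R)) // => j.
rewrite (eq_bigr (fun=> 1)) => [|i _]; last by rewrite expr1n.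
rewrite sumr_const (@eq_card _ _ [pred i : 'I_(m.*2) | odd i == j :> nat]) => [|i].
  rewrite (card_double_ord m (fun n => odd n == j :> nat)).
  rewrite (eq_bigr (fun=> 1%N)) => [|l _].
    by rewrite sum_nat_const card_ord muln1.
  by rewrite /= odd_double; case: j => -[|[]].
by rewrite unfold_in.
Qed.

Lemma xz_variance_ratio :
  var_opt M (fun=> 1) (si_grouping (fun=> 1 : R) xz_term)
    / var_opt M (fun=> 1) parity_group = m%:R / 2.
Proof.
rewrite var_opt_xz_sorted_insertion var_opt_xz_parity.
by field; rewrite pnatr_eq0 -lt0n m_gt0 lt0r_neq0.
Qed.

End XZHamiltonian.

Theorem theorem1 (R : realType) :
  (* (i) a sequence of Hamiltonians with Theta(1) coefficients, sorted insertion
     giving m groups, and an overlapped grouping with variance ratio Theta(m) *)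
  (exists (a b k1 k2 : R) (m0 : nat), 0 < a /\ 0 < k1 /\
     forall m : nat, (m0 <= m)%N ->
       exists (n N : nat) (c : 'I_N -> R) (P : 'I_N -> pauli n)
              (mR : nat) (Rg : 'I_mR -> {set 'I_N}),
         is_pauli_hamiltonian c P /\
         (forall i, a <= `|c i| <= b) /\
         si_num_groups c P = m /\
         overlapped_grouping P Rg /\
         forall M : R, 0 < M ->
           k1 * m%:R <= var_opt M c (si_grouping c P) / var_opt M c Rg
             <= k2 * m%:R) /\
  (* (ii) the reduction is at most O(m) for every grouping with m groups *)
  (exists C : R, 0 < C /\
     forall (n N : nat) (c : 'I_N -> R) (P : 'I_N -> pauli n)
            (m : nat) (G : 'I_m -> {set 'I_N})
            (mR : nat) (Rg : 'I_mR -> {set 'I_N}) (M : R),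
       is_pauli_hamiltonian c P -> grouping P G -> overlapped_grouping P Rg ->
       0 < M ->
       var_opt M c G / var_opt M c Rg <= C * m%:R).
Proof.
split.
  exists 1, 1, 2^-1, 2^-1, 1%N; split; first exact: ltr01.
  split; first by rewrite invr_gt0 ltr0n.
  move=> m m_gt0; exists m, m.*2, (fun=> 1), (@xz_term m), 2%N, (parity_group m).
  split; first by split; [move=> _; exact: oner_neq0 | exact: xz_term_inj].
  split; first by move=> _; rewrite normr1 lexx.
  split; first exact: si_num_groups_xz.
  split; first exact: overlapped_grouping_parity.
  by move=> M M_gt0; rewrite xz_variance_ratio // mulrC lexx.
exists 1; split; first exact: ltr01.
move=> n N c P m G mR Rg M _ groupG _ M_gt0.
by rewrite mul1r; exact: var_opt_ratio_le groupG.
Qed.
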